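(* Let $N$ denote a positive integer and, for each positive integer $n$, let $\mathscr E_n=\operatorname{span}_{\mathbb C}\{z^n n^q\mathcal H_{\alpha}(n): z,q\in\mathbb C,\ \alpha\text{ a word}\}$ and $\mathscr H_N=\operatorname{span}_{\mathbb C}\{\mathcal H_{\alpha}(N):\alpha\text{ a word}\}$. Suppose $F_1(n),\ldots,F_m(n)\in\mathscr E_n$, i.e. \[ F_j(n)=\sum_{\ell=1}^{M_j}c_{j,\ell}\,z_{j,\ell}^{\,n}\,n^{q_{j,\ell}}\,\mathcal H_{\alpha_{j,\ell}}(n) \] with $c_{j,\ell},z_{j,\ell},q_{j,\ell}\in\mathbb C$ and words $\alpha_{j,\ell}$. Then for every $e_1,\ldots,e_m\in\mathbb Z_{\ge0}$, the finite sum \[ S(N)=\sum_{n=1}^{N}\prod_{j=1}^{m}F_j(n)^{e_j} \] belongs to $\mathscr H_N$, i.e. it is a finite $\mathbb C$-linear combination of the numbers $\mathcal H_\beta(N)$ for words $\beta$.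
   Context: A letter is a pair $(r,s)\in\mathbb C^2$ and a word is a finite sequence of letters. For a word $\alpha=((r_1,s_1),\ldots,(r_d,s_d))$ and a positive integer $N$, \[ \mathcal H_{\alpha}(N)=\sum_{N\ge n_1>\cdots>n_d\ge1}\prod_{i=1}^{d}\frac{s_i^{n_i}}{n_i^{r_i}},\qquad \mathcal H_\emptyset(N)=1. \] Powers of positive integers are defined by $n^r=\exp(r\log n)$ with the real logarithm. *)

From Stdlib Require Import Reals List.
From Coquelicot Require Import Coquelicot.
Import ListNotations.
Open Scope C_scope.

Definition Cexp (w : C) : C :=
  (exp (fst w) * cos (snd w), exp (fst w) * sin (snd w))%R.

Definition npow (n : nat) (r : C) : C := Cexp (r * RtoC (ln (INR n))).

Definition letter := (C * C)%type.
Definition word := list letter.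

Fixpoint Csum_to (f : nat -> C) (N : nat) : C :=
  match N with
  | O => 0
  | S k => Csum_to f k + f (S k)
  end.
(* Csum_to f N = f 1 + ... + f N *)

(* H_alpha(N) = sum_{N >= n_1 > ... > n_d >= 1} prod_i s_i^{n_i} / n_i^{r_i},
   H_[](N) = 1.  Unfolded recursively on the first letter:
   H_((r,s)::beta)(N) = sum_{n=1}^{N} s^n / n^r * H_beta(n-1). *)
Fixpoint H (alpha : word) (N : nat) : C :=
  match alpha with
  | [] => 1
  | (r, s) :: beta => Csum_to (fun n => Cpow s n / npow n r * H beta (Nat.pred n)) N
  end.

Definition Eterm := (C * C * C * word)%type.

Definition eval_Eterm (t : Eterm) (n : nat) : C :=
  match t with (c, z, q, alpha) => c * Cpow z n * npow n q * H alpha n end.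

Definition eval_E (F : list Eterm) (n : nat) : C :=
  fold_right (fun t acc => eval_Eterm t n + acc) 0 F.

Definition prod_pows (Fs : list (list Eterm * nat)) (n : nat) : C :=
  fold_right (fun Fe acc => Cpow (eval_E (fst Fe) n) (snd Fe) * acc) 1 Fs.

Definition lincomb_H (B : list (C * word)) (N : nat) : C :=
  fold_right (fun db acc => fst db * H (snd db) N + acc) 0 B.

(** The sums [H_alpha] are closed under products: by the stuffle recurrence
    [H_(r,s)a * H_(r',s')b] is the sum over [k] of
    [s^k/k^r H_a H_(r',s')b + s'^k/k^r' H_b H_(r,s)a + (ss')^k/k^(r+r') H_a H_b],
    all evaluated at [k-1], so induction on the total length of the two words
    writes the product as a combination of [H_beta].  Hence [E_n] is a ring.
    Finally a single term is summed by splitting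
    [H_(r,s)b(n) = H_(r,s)b(n-1) + s^n/n^r H_b(n-1)]:
    [sum_{n<=N} c z^n n^q H_(r,s)b(n) = c H_((-q,z)(r,s)b)(N) + c H_((r-q,zs)b)(N)]. *)

From Stdlib Require Import Reals List Lia Wf_nat.
From Coquelicot Require Import Coquelicot.
Import ListNotations.
Open Scope C_scope.

Lemma Cexp_add (a b : C) : Cexp (a + b) = Cexp a * Cexp b.
Proof.
  destruct a as [a1 a2], b as [b1 b2]; unfold Cexp; simpl.
  rewrite exp_plus, cos_plus, sin_plus.
  apply injective_projections; simpl; ring.
Qed.

Lemma Cexp_0 : Cexp 0 = 1.
Proof.
  unfold Cexp; simpl; rewrite exp_0, cos_0, sin_0.
  apply injective_projections; simpl; ring.
Qed.

Lemma npow_add (n : nat) (a b : C) : npow n (a + b) = npow n a * npow n b.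
Proof. unfold npow; rewrite <- Cexp_add; f_equal; ring. Qed.

Lemma npow_0 (n : nat) : npow n 0 = 1.
Proof.
  unfold npow; replace (0 * RtoC (ln (INR n))) with (RtoC 0) by ring.
  apply Cexp_0.
Qed.

Lemma npow_neq0 (n : nat) (a : C) : npow n a <> 0.
Proof.
  intros Hzero.
  assert (Hcancel : npow n (a + - a) = 0) by (rewrite npow_add, Hzero; ring).
  replace (a + - a) with (RtoC 0) in Hcancel by ring.
  rewrite npow_0 in Hcancel; exact (C1_nz Hcancel).
Qed.

Lemma npow_opp (n : nat) (a : C) : npow n (- a) = / npow n a.
Proof.
  assert (Hsum : npow n (- a) * npow n a = 1).
  { rewrite <- npow_add; replace (- a + a) with (RtoC 0) by ring; apply npow_0. }
  pose proof (npow_neq0 n a).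
  field_simplify_eq; auto.
Qed.

Lemma npow_sub (n : nat) (a b : C) : npow n (a - b) = npow n a / npow n b.
Proof. replace (a - b) with (a + - b) by ring; rewrite npow_add, npow_opp; reflexivity. Qed.

Lemma Csum_to_S (f : nat -> C) (N : nat) : Csum_to f (S N) = Csum_to f N + f (S N).
Proof. reflexivity. Qed.

Lemma Csum_to_ext (f g : nat -> C) (N : nat) :
  (forall n, f (S n) = g (S n)) -> Csum_to f N = Csum_to g N.
Proof. intros Hfg; induction N as [|N IHN]; simpl; [reflexivity|]; rewrite IHN, Hfg; reflexivity. Qed.

Lemma Csum_to_0 (N : nat) : Csum_to (fun _ => 0) N = 0.
Proof. induction N as [|N IHN]; simpl; [reflexivity|]; rewrite IHN; ring. Qed.

Lemma Csum_to_plus (f g : nat -> C) (N : nat) :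
  Csum_to (fun n => f n + g n) N = Csum_to f N + Csum_to g N.
Proof. induction N as [|N IHN]; simpl; [ring|]; rewrite IHN; ring. Qed.

Lemma Csum_to_scal (c : C) (f : nat -> C) (N : nat) :
  Csum_to (fun n => c * f n) N = c * Csum_to f N.
Proof. induction N as [|N IHN]; simpl; [ring|]; rewrite IHN; ring. Qed.

Lemma H_cons_S (r s : C) (b : word) (n : nat) :
  H ((r, s) :: b) (S n) = H ((r, s) :: b) n + Cpow s (S n) / npow (S n) r * H b n.
Proof. reflexivity. Qed.

Lemma H_cons_mul_cons (r s r' s' : C) (a b : word) (N : nat) :
  H ((r, s) :: a) N * H ((r', s') :: b) N =
  Csum_to (fun k =>
      Cpow s k / npow k r * (H a (pred k) * H ((r', s') :: b) (pred k))
    + Cpow s' k / npow k r' * (H b (pred k) * H ((r, s) :: a) (pred k))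
    + Cpow (s * s') k / npow k (r + r') * (H a (pred k) * H b (pred k))) N.
Proof.
  induction N as [|N IHN]; [simpl; ring|].
  rewrite Csum_to_S, <- IHN, !H_cons_S; cbn [Nat.pred].
  rewrite Cpow_mult_l, npow_add.
  pose proof (npow_neq0 (S N) r); pose proof (npow_neq0 (S N) r').
  field; auto.
Qed.

Lemma Csum_to_Eterm_nil (c z q : C) (N : nat) :
  Csum_to (eval_Eterm (c, z, q, [])) N = c * H [(- q, z)] N.
Proof.
  induction N as [|N IHN]; [simpl; ring|].
  rewrite Csum_to_S, IHN, H_cons_S, npow_opp; unfold eval_Eterm; simpl H.
  pose proof (npow_neq0 (S N) q); field; auto.
Qed.

Lemma Csum_to_Eterm_cons (c z q r s : C) (b : word) (N : nat) :
  Csum_to (eval_Eterm (c, z, q, (r, s) :: b)) N =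
  c * H ((- q, z) :: (r, s) :: b) N + c * H ((r - q, z * s) :: b) N.
Proof.
  induction N as [|N IHN]; [simpl; ring|].
  rewrite Csum_to_S, IHN, !H_cons_S; unfold eval_Eterm; rewrite H_cons_S.
  rewrite Cpow_mult_l, npow_opp, npow_sub.
  pose proof (npow_neq0 (S N) q); pose proof (npow_neq0 (S N) r).
  field; auto.
Qed.

Definition in_H_span (f : nat -> C) : Prop :=
  exists B : list (C * word), forall N, f N = lincomb_H B N.

Definition in_E (f : nat -> C) : Prop :=
  exists L : list Eterm, forall n, f n = eval_E L n.

Lemma in_H_span_ext (f g : nat -> C) :
  (forall N, f N = g N) -> in_H_span g -> in_H_span f.
Proof. intros Hfg [B HB]; exists B; intros N; rewrite Hfg; apply HB. Qed.

Lemma in_H_span_scal_H (c : C) (w : word) : in_H_span (fun N => c * H w N).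
Proof. exists [(c, w)]; intros N; simpl; ring. Qed.

Lemma in_H_span_add (f g : nat -> C) :
  in_H_span f -> in_H_span g -> in_H_span (fun N => f N + g N).
Proof.
  intros [B1 HB1] [B2 HB2]; exists (B1 ++ B2); intros N.
  rewrite HB1, HB2; clear HB1 HB2.
  induction B1 as [|db B1 IH]; simpl; [ring|]; rewrite <- IH; ring.
Qed.

Lemma in_H_span_Csum_to_plus (f g : nat -> C) :
  in_H_span (Csum_to f) -> in_H_span (Csum_to g) ->
  in_H_span (Csum_to (fun k => f k + g k)).
Proof.
  intros Hf Hg; apply (in_H_span_ext _ _ (Csum_to_plus f g)).
  apply in_H_span_add; assumption.
Qed.

Lemma in_H_span_Csum_prepend (r s : C) (f : nat -> C) :
  in_H_span f ->
  in_H_span (fun N => Csum_to (fun k => Cpow s k / npow k r * f (pred k)) N).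
Proof.
  intros [B HB].
  exists (map (fun db => (fst db, (r, s) :: snd db)) B); intros N.
  rewrite (Csum_to_ext _ (fun k => Cpow s k / npow k r * lincomb_H B (pred k)))
    by (intros n; rewrite HB; reflexivity).
  clear HB; induction B as [|[d w] B IH]; simpl.
  - transitivity (Csum_to (fun _ => 0) N); [|apply Csum_to_0].
    apply Csum_to_ext; intros n; ring.
  - rewrite <- IH, <- Csum_to_scal, <- Csum_to_plus.
    apply Csum_to_ext; intros n; simpl; ring.
Qed.

Lemma H_mul_in_H_span (a b : word) : in_H_span (fun N => H a N * H b N).
Proof.
  remember (length a + length b)%nat as m eqn:Hm.
  revert a b Hm; induction m as [m IHm] using lt_wf_ind; intros a b Hm.
  destruct a as [|[r s] a].
  { apply (in_H_span_ext _ (fun N => 1 * H b N)); [intros N; simpl; ring|].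
    apply in_H_span_scal_H. }
  destruct b as [|[r' s'] b].
  { apply (in_H_span_ext _ (fun N => 1 * H ((r, s) :: a) N)); [intros N; simpl; ring|].
    apply in_H_span_scal_H. }
  simpl in Hm.
  eapply in_H_span_ext; [intros N; apply H_cons_mul_cons|].
  repeat apply in_H_span_Csum_to_plus.
  - apply (in_H_span_Csum_prepend r s (fun n => H a n * H ((r', s') :: b) n)).
    apply (IHm (length a + S (length b))%nat); [subst m; lia | reflexivity].
  - apply (in_H_span_Csum_prepend r' s' (fun n => H b n * H ((r, s) :: a) n)).
    apply (IHm (length b + S (length a))%nat); [subst m; lia | reflexivity].
  - apply (in_H_span_Csum_prepend (r + r') (s * s') (fun n => H a n * H b n)).
    apply (IHm (length a + length b)%nat); [subst m; lia | reflexivity].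
Qed.

Lemma in_E_ext (f g : nat -> C) : (forall n, f n = g n) -> in_E g -> in_E f.
Proof. intros Hfg [L HL]; exists L; intros n; rewrite Hfg; apply HL. Qed.

Lemma in_E_0 : in_E (fun _ => 0).
Proof. exists []; reflexivity. Qed.

Lemma in_E_Eterm (t : Eterm) : in_E (eval_Eterm t).
Proof. exists [t]; intros n; simpl; ring. Qed.

Lemma in_E_1 : in_E (fun _ => 1).
Proof.
  apply (in_E_ext _ (eval_Eterm (RtoC 1, RtoC 1, RtoC 0, []))); [|apply in_E_Eterm].
  intros n; unfold eval_Eterm; rewrite Cpow_1_l, npow_0; simpl; ring.
Qed.

Lemma in_E_add (f g : nat -> C) : in_E f -> in_E g -> in_E (fun n => f n + g n).
Proof.
  intros [L1 HL1] [L2 HL2]; exists (L1 ++ L2); intros n.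
  rewrite HL1, HL2; clear HL1 HL2.
  induction L1 as [|t L1 IH]; simpl; [ring|]; rewrite <- IH; ring.
Qed.

Lemma in_E_of_H_span (c z q : C) (f : nat -> C) :
  in_H_span f -> in_E (fun n => c * Cpow z n * npow n q * f n).
Proof.
  intros [B HB].
  apply (in_E_ext _ (fun n => c * Cpow z n * npow n q * lincomb_H B n));
    [intros n; rewrite HB; reflexivity|].
  clear HB; induction B as [|[d w] B IH]; simpl.
  - apply (in_E_ext _ _ (fun _ => Cmult_0_r _)), in_E_0.
  - apply (in_E_ext _ (fun n => eval_Eterm (c * d, z, q, w) n
                               + c * Cpow z n * npow n q * lincomb_H B n)).
    + intros n; unfold eval_Eterm; simpl; ring.
    + apply in_E_add; [apply in_E_Eterm | exact IH].
Qed.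

Lemma in_E_Eterm_mul (t1 t2 : Eterm) : in_E (fun n => eval_Eterm t1 n * eval_Eterm t2 n).
Proof.
  destruct t1 as [[[c z] q] a], t2 as [[[c' z'] q'] b].
  apply (in_E_ext _ (fun n => c * c' * Cpow (z * z') n * npow n (q + q') * (H a n * H b n))).
  - intros n; unfold eval_Eterm; rewrite Cpow_mult_l, npow_add; ring.
  - apply in_E_of_H_span, H_mul_in_H_span.
Qed.

Lemma in_E_mul (f g : nat -> C) : in_E f -> in_E g -> in_E (fun n => f n * g n).
Proof.
  intros [L1 HL1] [L2 HL2].
  apply (in_E_ext _ (fun n => eval_E L1 n * eval_E L2 n));
    [intros n; rewrite HL1, HL2; reflexivity|].
  clear HL1 HL2; induction L1 as [|t1 L1 IH1]; simpl.
  - apply (in_E_ext _ _ (fun _ => Cmult_0_l _)), in_E_0.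
  - apply (in_E_ext _ (fun n => eval_Eterm t1 n * eval_E L2 n + eval_E L1 n * eval_E L2 n));
      [intros n; ring|].
    apply in_E_add; [clear IH1|exact IH1].
    induction L2 as [|t2 L2 IH2]; simpl.
    + apply (in_E_ext _ _ (fun _ => Cmult_0_r _)), in_E_0.
    + apply (in_E_ext _ (fun n => eval_Eterm t1 n * eval_Eterm t2 n
                                 + eval_Eterm t1 n * eval_E L2 n)); [intros n; ring|].
      apply in_E_add; [apply in_E_Eterm_mul | exact IH2].
Qed.

Lemma in_E_pow (L : list Eterm) (e : nat) : in_E (fun n => Cpow (eval_E L n) e).
Proof.
  induction e as [|e IHe]; simpl; [apply in_E_1|].
  apply (in_E_mul (eval_E L)); [exists L; reflexivity | exact IHe].
Qed.

Lemma in_E_prod_pows (Fs : list (list Eterm * nat)) : in_E (prod_pows Fs).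
Proof.
  induction Fs as [|[L e] Fs IH]; [apply in_E_1|].
  apply (in_E_mul (fun n => Cpow (eval_E L n) e)); [apply in_E_pow | exact IH].
Qed.

Lemma in_H_span_Csum_to_Eterm (t : Eterm) : in_H_span (Csum_to (eval_Eterm t)).
Proof.
  destruct t as [[[c z] q] [|[r s] b]].
  - apply (in_H_span_ext _ _ (Csum_to_Eterm_nil c z q)), in_H_span_scal_H.
  - apply (in_H_span_ext _ _ (Csum_to_Eterm_cons c z q r s b)).
    apply in_H_span_add; apply in_H_span_scal_H.
Qed.

Lemma in_H_span_Csum_to (f : nat -> C) : in_E f -> in_H_span (Csum_to f).
Proof.
  intros [L HL].
  apply (in_H_span_ext _ (Csum_to (eval_E L)));
    [intros N; apply Csum_to_ext; intros n; apply HL|].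
  clear HL; induction L as [|t L IH].
  - exists []; apply Csum_to_0.
  - apply in_H_span_Csum_to_plus; [apply in_H_span_Csum_to_Eterm | exact IH].
Qed.

Theorem theorem3p1 :
  forall Fs : list (list Eterm * nat),
  exists B : list (C * word),
    forall N : nat, (1 <= N)%nat ->
      Csum_to (prod_pows Fs) N = lincomb_H B N.
Proof.
  intros Fs.
  destruct (in_H_span_Csum_to _ (in_E_prod_pows Fs)) as [B HB].
  exists B; intros N _; apply HB.
Qed.
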